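(* Let $\mathcal{M}$ be the set of compactly supported probability distributions on $\mathbb{R}$ and $\rho:\mathcal{M}\to\mathbb{R}$. Then $\{u\circ\rho: u\in\mathcal{F}_U\}=\{\rho\circ T^u: u\in\mathcal{F}_U\}$ if and only if there exist a strictly monotone, continuous, surjective $h:\mathbb{R}\to\mathbb{R}$ and a quantile $\widehat\rho:\mathcal{M}\to\mathbb{R}$ such that $\rho=h\circ\widehat\rho$.
   Context: $\mathcal{F}_U$ is the set of increasing (non-decreasing) continuous functions $u:\mathbb{R}\to\mathbb{R}$; $T^u(F)$ is the distribution of $u(X)$ when $X\sim F$. For a cdf $F$, $F_L^{-1}(t)=\inf\{x:F(x)\ge t\}$ for $t\in(0,1]$ and $F_R^{-1}(t)=\inf\{x:F(x)>t\}$ for $t\in[0,1)$. A map $\widehat\rho:\mathcal{M}\to\mathbb{R}$ is a quantile if either there is $p\in(0,1]$ with $\widehat\rho(F)=F_L^{-1}(p)$ for all $F$, or there is $p\in[0,1)$ with $\widehat\rho(F)=F_R^{-1}(p)$ for all $F$. *)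

From HB Require Import structures.
From mathcomp Require Import all_boot all_order all_algebra.
From mathcomp Require Import all_classical all_reals.
From mathcomp Require Import topology normedtype.
Set Implicit Arguments. Unset Strict Implicit. Unset Printing Implicit Defensive.
Import Order.TTheory GRing.Theory Num.Theory.
Import numFieldNormedType.Exports.
Local Open Scope classical_set_scope.
Local Open Scope ring_scope.

(* A distribution on R is represented by its cdf F : R -> R.
   isM F : F is the cdf of a compactly supported probability distribution:
   nondecreasing, right-continuous, F = 0 left of some a, F = 1 right of some b. *)
Definition isM (R : realType) (F : R -> R) : Prop :=
  {homo F : x y / x <= y} /\
  (forall x : R, F @ x^'+ --> F x) /\
  (exists a b : R, (forall x, x < a -> F x = 0) /\ (forall x, b <= x -> F x = 1)).

Definition inFU (R : realType) (u : R -> R) : Prop :=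
  {homo u : x y / x <= y} /\ continuous u.

(* T^u(F) : cdf of u(X) for X ~ F, i.e. y |-> P(u(X) <= y) = F-mass of
   {x | u x <= y}; for u non-decreasing continuous this set is empty, R, or
   (-oo, a], so its mass is sup ({0} U {F x | u x <= y}). *)
Definition Tu (R : realType) (u : R -> R) (F : R -> R) : R -> R :=
  fun y => sup ([set 0] `|` [set F x | x in [set x | u x <= y]]).

Definition qL (R : realType) (F : R -> R) (t : R) : R := inf [set x | t <= F x].
Definition qR (R : realType) (F : R -> R) (t : R) : R := inf [set x | t < F x].

Definition is_quantile (R : realType) (rh : (R -> R) -> R) : Prop :=
  (exists p : R, 0 < p <= 1 /\ forall F, isM F -> rh F = qL F p) \/
  (exists p : R, 0 <= p < 1 /\ forall F, isM F -> rh F = qR F p).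

Definition strictly_monotone (R : realType) (h : R -> R) : Prop :=
  (forall x y, x < y -> h x < h y) \/ (forall x y, x < y -> h y < h x).

Definition comp_sets_equal (R : realType) (rho : (R -> R) -> R) : Prop :=
  (forall u, inFU u -> exists v, inFU v /\ forall F, isM F -> u (rho F) = rho (Tu v F)) /\
  (forall v, inFU v -> exists u, inFU u /\ forall F, isM F -> rho (Tu v F) = u (rho F)).

From HB Require Import structures.
From mathcomp Require Import all_boot all_order all_algebra.
From mathcomp Require Import all_classical all_reals.
From mathcomp Require Import topology normedtype.
From mathcomp Require Import lra.
Set Implicit Arguments. Unset Strict Implicit. Unset Printing Implicit Defensive.
Import Order.TTheory GRing.Theory Num.Theory.
Import numFieldNormedType.Exports.
Local Open Scope classical_set_scope.
Local Open Scope ring_scope.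

(* Let g c := rho (dirac_cdf c).  Since T^v maps dirac_cdf c to dirac_cdf (v c),
   the hypothesis gives for every v in F_U some u in F_U with g \o v = u \o g.  For
   affine v this makes g injective (otherwise g would be constant, whereas constant
   maps u make g onto); for v = max c and v = min c it puts g c strictly between
   g x and g y whenever x < c < y.  So g is a strictly monotone homeomorphism and
   psi := g^-1 \o rho satisfies psi (T^v F) = v (psi F).
   The cdf G := F \o squeeze e is F with a flat piece of length one inserted at e:
   T^(squeeze e) G = F, while clamping to [e, e + 1] turns G into the Bernoulli law
   three_point_cdf (F e) 1 with mass F e at 0.  With c := clamp01 (psi G - e) this
   gives psi F = psi G - c and s (F e) = c, where s t := psi (three_point_cdf t 1);
   hence s (F e) is 0 when psi F < e and 1 when psi F > e.  Applied to Dirac masses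
   and three-point laws, this shows that {t in [0, 1] | s t = 0} is [p, 1] or
   ]p, 1], and then psi F = inf {x | s (F x) = 0} is the left or right p-quantile
   of F.  Conversely, quantiles commute with every T^v, so conjugating by h maps
   F_U onto itself in both directions. *)

Ltac decide_lt :=
  repeat match goal with
  | |- context [if ?a < ?b then _ else _] =>
      first [rewrite (_ : a < b); last lra | rewrite (le_gtF (_ : b <= a)); last lra]
  end.

Section real_functions.
Variable R : realType.
Implicit Types (f h k : R -> R) (S : set R).

Lemma inf_threshold S c :
  (forall y, c < y -> S y) -> (forall y, y < c -> ~ S y) -> inf S = c.
Proof.
move=> gtS ltS; have lbS : lbound S c.
  by move=> y Sy; rewrite leNgt; apply/negP => /ltS.
apply/le_anti/andP; split; last by apply: lb_le_inf => //; exists (c + 1); apply: gtS; lra.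
rewrite leNgt; apply/negP => c_inf.
have := ge_inf (ex_intro _ c lbS) (gtS ((c + inf S) / 2) _); lra.
Qed.

Lemma continuous_lt_right f x y : continuous f -> f x < y -> exists2 z, x < z & f z < y.
Proof.
move=> fc fxy; suff [z []] : exists z, x < z /\ f z < y by exists z.
apply: (@filter_ex _ x^'+); near=> z; split; first by near: z; exact: nbhs_right_gt.
by near: z; apply: cvg_within; exact: cvgr_lt (fc x) _ fxy.
Unshelve. all: by end_near. Qed.

Lemma continuous_gt_left f x y : continuous f -> y < f x -> exists2 z, z < x & y < f z.
Proof.
move=> fc fxy; suff [z []] : exists z, z < x /\ y < f z by exists z.
apply: (@filter_ex _ x^'-); near=> z; split; first by near: z; exact: nbhs_left_lt.
by near: z; apply: cvg_within; exact: cvgr_gt (fc x) _ fxy.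
Unshelve. all: by end_near. Qed.

Lemma continuous_sublevel_max f y : continuous f -> {homo f : x y / x <= y} ->
    (exists x, f x <= y) -> (exists t, y < f t) ->
  exists2 m, f m <= y & forall x, f x <= y -> x <= m.
Proof.
move=> fc f_nd [x fx] [t yt]; pose S := [set x | f x <= y].
have S_ub : ubound S t.
  by move=> z; rewrite /S /= => fz; rewrite leNgt; apply/negP => /ltW /f_nd; lra.
have S_sup : has_sup S by split; [exists x | exists t].
exists (sup S); last by move=> z; exact: sup_upper_bound.
rewrite leNgt; apply/negP => /(continuous_gt_left fc) [z z_sup yz].
have [w] := sup_gt (ex_intro _ x fx) z_sup; rewrite /S /= => fw zw.
by have := f_nd _ _ (ltW zw); lra.
Qed.

Lemma nondecreasing_surj_continuous f :
  {homo f : x y / x <= y} -> (forall y, exists x, f x = y) -> continuous f.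
Proof.
move=> f_nd f_surj x; apply/cvgrPdist_lt => e e0.
have [a fa] := f_surj (f x - e / 2); have [b fb] := f_surj (f x + e / 2).
have ax : a < x by rewrite ltNge; apply/negP => /f_nd; lra.
have xb : x < b by rewrite ltNge; apply/negP => /f_nd; lra.
near=> y.
have /f_nd : a <= y by apply/ltW; near: y; exact: lt_nbhsr.
have /f_nd : y <= b by apply/ltW; near: y; exact: lt_nbhsl.
rewrite ltr_norml; lra.
Unshelve. all: by end_near. Qed.

Lemma strictly_monotone_surj_continuous f :
  strictly_monotone f -> (forall y, exists x, f x = y) -> continuous f.
Proof.
move=> [f_inc|f_dec] f_surj.
  by apply: nondecreasing_surj_continuous => //; exact: ltW_homo.
have Nf_cont : continuous (fun x => - f x).
  apply: nondecreasing_surj_continuous; first by apply: ltW_homo => u v /f_dec; rewrite ltrN2.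
  by move=> y; have [u fu] := f_surj (- y); exists u; rewrite fu opprK.
have -> : f = (fun x => - (- f x)) by apply/funext => x; rewrite opprK.
by move=> x; apply: cvgN; exact: Nf_cont.
Qed.

Lemma strictly_monotone_inj f : strictly_monotone f -> injective f.
Proof.
move=> f_sm x y fxy; case: (ltgtP x y) => // xy.
  by case: f_sm => /(_ _ _ xy); rewrite fxy ltxx.
by case: f_sm => /(_ _ _ xy); rewrite fxy ltxx.
Qed.

Lemma strictly_monotone_can h k : cancel k h -> strictly_monotone h -> strictly_monotone k.
Proof.
move=> hK [h_inc|h_dec]; [left|right] => x y xy.
  by case: (ltgtP (k x) (k y)) => // [/h_inc|/(congr1 h)]; rewrite !hK; lra.
by case: (ltgtP (k x) (k y)) => // [/h_dec|/(congr1 h)]; rewrite !hK; lra.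
Qed.

Lemma strictly_monotone_between f :
    (forall x c y, x < c -> c < y -> (f x < f c < f y) \/ (f y < f c < f x)) ->
  strictly_monotone f.
Proof.
move=> f_btw.
have dir x c y : x < c -> c < y ->
    (f x < f c <-> f c < f y) /\ (f x < f c <-> f x < f y).
  by move=> xc cy; case: (f_btw x c y xc cy) => /andP[? ?]; split; split=> ?; lra.
have same_right a b U : a < U -> b < U -> (f a < f U <-> f b < f U).
  move=> aU bU; case: (ltgtP a b) => [ab|ba|-> //].
    by have [[? ?] [? ?]] := dir a b U ab bU; split=> ?; auto.
  by have [[? ?] [? ?]] := dir b a U ba aU; split=> ?; auto.
have dir01 x y : x < y -> (f x < f y <-> f 0 < f 1).
  move=> xy; set U := Num.max y 1 + 1.
  have [yU oneU] : y < U /\ 1 < U.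
    by have := le_max y y 1; have := le_max 1 y 1; rewrite !lexx orbT /U; split; lra.
  apply: iff_trans (dir x y U xy yU).2 _.
  apply: iff_trans (same_right x 0 U _ _) _; [lra | lra |].
  exact: iff_sym (dir 0 1 U ltr01 oneU).2.
have [f01|f10] := boolP (f 0 < f 1); [left|right] => x y xy; first exact/(dir01 _ _ xy).
have [m1 m2] : x < (x + y) / 2 /\ (x + y) / 2 < y by split; lra.
case: (f_btw _ _ _ m1 m2) => /andP[? ?]; last lra.
have /(dir01 _ _ xy) f01 : f x < f y by lra.
by rewrite f01 in f10.
Qed.

Lemma upward_closed01_threshold (Z : R -> Prop) :
    (forall t t', 0 <= t -> t <= t' -> t' <= 1 -> Z t -> Z t') -> Z 1 -> ~ Z 0 ->
  exists p, (0 < p <= 1 /\ forall t, 0 <= t <= 1 -> (Z t <-> p <= t)) \/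
            (0 <= p < 1 /\ forall t, 0 <= t <= 1 -> (Z t <-> p < t)).
Proof.
move=> Z_up Z1 Z0; set S := [set t | 0 <= t <= 1 /\ Z t].
have S1 : S 1 by rewrite /S /= ler01 lexx.
have S_lb : lbound S 0 by move=> t [/andP[]].
have p0 : 0 <= inf S by apply: lb_le_inf => //; exists 1.
have p1 : inf S <= 1 by apply: ge_inf S1; exists 0.
have ltZ t : 0 <= t -> t < inf S -> t <= 1 -> ~ Z t.
  move=> t0 tp t1 Zt; have St : S t by rewrite /S /= t0 t1.
  have := ge_inf (ex_intro _ 0 S_lb) St; lra.
have gtZ t : inf S < t -> t <= 1 -> Z t.
  by move=> /(inf_lt (ex_intro _ 1 S1)) [t0 [/andP[t00 _] Zt0] /ltW t0t] t1; exact: Z_up Zt0.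
exists (inf S); have [Zp|Zp] := pselect (Z (inf S)); [left|right].
  have p_gt0 : 0 < inf S.
    by rewrite lt_neqAle p0 andbT; apply/eqP => p_eq0; rewrite -p_eq0 in Zp.
  split=> [|t /andP[t0 t1]]; first by rewrite p_gt0 p1.
  split=> [Zt|]; first by rewrite leNgt; apply/negP => /ltZ; exact.
  by rewrite le_eqVlt => /predU1P[<-//|/gtZ]; exact.
have p_lt1 : inf S < 1.
  by rewrite lt_neqAle p1 andbT; apply/eqP => p_eq1; rewrite p_eq1 in Zp.
split=> [|t /andP[t0 t1]]; first by rewrite p_lt1 p0.
split=> [Zt|/gtZ]; last exact.
by rewrite ltNge le_eqVlt; apply/negP => /predU1P[tp|/ltZ]; [rewrite tp in Zt | exact].
Qed.

End real_functions.

Section nondecreasing_maps.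
Variable R : realType.
Implicit Types (f h k u : R -> R) (x y e : R).

Lemma inFU_1lipschitz f : (forall x y, x <= y -> f x <= f y <= f x + (y - x)) -> inFU f.
Proof.
move=> f_lip; split; first by move=> x y /f_lip /andP[].
move=> x; apply/cvgrPdist_lt => e e0; exists e => //= y /=; rewrite ltr_norml.
by case: (leP x y) => [/f_lip|/ltW /f_lip] /andP[? ?]; rewrite ltr_norml; lra.
Qed.

Lemma inFU_cst c : inFU (fun _ : R => c).
Proof. by apply: inFU_1lipschitz => x y xy; lra. Qed.

Lemma inFU_max c : inFU (fun x : R => Num.max x c).
Proof.
by apply: inFU_1lipschitz => x y xy; rewrite !maxEle; case: (leP x c); case: (leP y c); lra.
Qed.

Lemma inFU_min c : inFU (fun x : R => Num.min x c).
Proof.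
by apply: inFU_1lipschitz => x y xy; rewrite !minEle; case: (leP x c); case: (leP y c); lra.
Qed.

Lemma inFU_affine (a b : R) : 0 <= a -> inFU (fun x => b + a * x).
Proof.
move=> a0; split; first by move=> x y xy; rewrite lerD2l ler_wpM2l.
by move=> x; apply: cvgD; [exact: cvg_cst | apply: cvgM; [exact: cvg_cst | exact: cvg_id]].
Qed.

Lemma inFU_conj h k u : cancel k h -> strictly_monotone h ->
  continuous h -> continuous k -> inFU u -> inFU (k \o u \o h).
Proof.
move=> hK h_sm h_cont k_cont [u_nd u_cont]; split.
  move=> x y; rewrite le_eqVlt => /predU1P[->//|xy] /=; rewrite leNgt; apply/negP.
  by case: h_sm => h_mono /h_mono; rewrite !hK; have := u_nd _ _ (ltW (h_mono _ _ xy)); lra.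
move=> x; apply: continuous_comp; first exact: h_cont.
by apply: continuous_comp; [exact: u_cont | exact: k_cont].
Qed.

Definition clamp01 x : R := if x < 0 then 0 else if x < 1 then x else 1.

Definition squeeze e x : R := x - clamp01 (x - e).

Lemma inFU_clamp01_shift e : inFU (fun x => clamp01 (x - e)).
Proof.
apply: inFU_1lipschitz => x y xy; rewrite /clamp01.
by case: (ltP (x - e) 0); case: (ltP (x - e) 1);
   case: (ltP (y - e) 0); case: (ltP (y - e) 1); lra.
Qed.

Lemma inFU_squeeze e : inFU (squeeze e).
Proof.
apply: inFU_1lipschitz => x y xy; rewrite /squeeze /clamp01.
by case: (ltP (x - e) 0); case: (ltP (x - e) 1);
   case: (ltP (y - e) 0); case: (ltP (y - e) 1); lra.
Qed.

Lemma squeeze_bounds e x : x - 1 <= squeeze e x <= x.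
Proof. by rewrite /squeeze /clamp01; case: (ltP (x - e) 0); case: (ltP (x - e) 1); lra. Qed.

Lemma squeeze_surj e y : exists x, squeeze e x = y.
Proof.
rewrite /squeeze /clamp01; case: (ltP y e) => ye; first by exists y; decide_lt; lra.
by exists (y + 1); decide_lt; lra.
Qed.

End nondecreasing_maps.

Section cdfs.
Variable R : realType.
Implicit Types (F G v : R -> R) (x y : R).

Lemma isM_ge0 F x : isM F -> 0 <= F x.
Proof.
move=> [F_nd [_ [a [_ [Fa _]]]]]; rewrite -(Fa (Num.min x (a - 1))).
  by apply: F_nd; rewrite ge_min lexx.
by rewrite gt_min orbC; apply/orP; left; lra.
Qed.

Lemma isM_le1 F x : isM F -> F x <= 1.
Proof.
move=> [F_nd [_ [_ [b [_ Fb]]]]]; rewrite -(Fb (Num.max x b)) ?le_max ?lexx ?orbT //.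
by apply: F_nd; rewrite le_max lexx.
Qed.

Lemma nondecreasing_cvg_at_right G x : {homo G : x y / x <= y} ->
  (forall e, 0 < e -> exists2 y, x < y & G y <= G x + e) -> G @ x^'+ --> G x.
Proof.
move=> G_nd G_rc; apply/cvgrPdist_lt => e e0.
have [y xy Gy] : exists2 y, x < y & G y <= G x + e / 2 by apply: G_rc; lra.
near=> z; have xz : x < z by near: z; exact: nbhs_right_gt.
have zy : z < y by near: z; exact: nbhs_right_lt.
have /G_nd Gxz : x <= z by exact: ltW.
have /G_nd Gzy : z <= y by exact: ltW.
by rewrite ltr_norml; lra.
Unshelve. all: by end_near. Qed.

Lemma cvg_at_right_le G x e : G @ x^'+ --> G x -> 0 < e -> exists2 y, x < y & G y <= G x + e.
Proof.
move=> /cvgrPdist_lt G_rc e0; suff [y [xy]] : exists y, x < y /\ `|G x - G y| < e.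
  by rewrite ltr_norml => Gy; exists y => //; lra.
apply: (@filter_ex _ x^'+); near=> y; split; first by near: y; exact: nbhs_right_gt.
by near: y; exact: G_rc.
Unshelve. all: by end_near. Qed.

Lemma isM_right_flat F a b : {homo F : x y / x <= y} ->
    (forall x, exists2 y, x < y & F y = F x) ->
    (forall x, x < a -> F x = 0) -> (forall x, b <= x -> F x = 1) -> isM F.
Proof.
move=> F_nd F_flat Fa Fb; split=> //; split; last by exists a, b.
move=> x; apply: nondecreasing_cvg_at_right => // e e0.
by have [y xy Fy] := F_flat x; exists y => //; lra.
Qed.

Definition dirac_cdf (c x : R) : R := if x < c then 0 else 1.

Definition three_point_cdf (t t' x : R) : R :=
  if x < 0 then 0 else if x < 1 then t else if x < 2 then t' else 1.

Lemma isM_dirac c : isM (dirac_cdf c).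
Proof.
apply: (@isM_right_flat _ c c); rewrite /dirac_cdf.
- by move=> x y xy; case: (ltP x c); case: (ltP y c); lra.
- move=> x; case: (ltP x c) => xc; first by exists ((x + c) / 2); [lra | decide_lt].
  by exists (x + 1); [lra | decide_lt].
- by move=> x ->.
- by move=> x cx; decide_lt.
Qed.

Lemma isM_three_point_cdf t t' : 0 <= t -> t <= t' -> t' <= 1 -> isM (three_point_cdf t t').
Proof.
move=> t0 tt' t'1; apply: (@isM_right_flat _ 0 2); rewrite /three_point_cdf.
- move=> x y xy.
  case: (ltP y 0) => y0; first by rewrite (le_lt_trans xy y0).
  case: (ltP x 0) => x0; first by case: (ltP y 1); case: (ltP y 2); lra.
  case: (ltP y 1) => y1; first by rewrite (le_lt_trans xy y1).
  case: (ltP x 1) => x1; first by case: (ltP y 2); lra.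
  case: (ltP y 2) => y2; first by rewrite (le_lt_trans xy y2).
  by case: (ltP x 2); lra.
- move=> x; case: (ltP x 0) => x0; first by exists (x / 2); [lra | decide_lt].
  case: (ltP x 1) => x1; first by exists ((x + 1) / 2); [lra | decide_lt].
  case: (ltP x 2) => x2; first by exists ((x + 2) / 2); [lra | decide_lt].
  by exists (x + 1); [lra | decide_lt].
- by move=> x ->.
- by move=> x x2; decide_lt.
Qed.

Lemma Tu_le v F y m : 0 <= m -> (forall x, v x <= y -> F x <= m) -> Tu v F y <= m.
Proof.
move=> m0 Fm; apply: ge_sup; first by exists 0; left.
by move=> _ [->|[x /= vx <-]] //; exact: Fm.
Qed.

Lemma Tu_ge v F y x : isM F -> v x <= y -> F x <= Tu v F y.
Proof.
move=> FM vx; apply: ub_le_sup; last by right; exists x.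
by exists 1 => _ [->|[z _ <-]]; [exact: ler01 | exact: isM_le1].
Qed.

Lemma Tu_ge0 v F y : isM F -> 0 <= Tu v F y.
Proof.
move=> FM; apply: ub_le_sup; last by left.
by exists 1 => _ [->|[z _ <-]]; [exact: ler01 | exact: isM_le1].
Qed.

Lemma Tu_max v F y x : isM F ->
  v x <= y -> (forall z, v z <= y -> F z <= F x) -> Tu v F y = F x.
Proof. by move=> FM vx Fx; apply/le_anti; rewrite Tu_le ?Tu_ge ?isM_ge0. Qed.

Lemma Tu_eq0 v F y : isM F -> (forall x, v x <= y -> F x = 0) -> Tu v F y = 0.
Proof. by move=> FM F0; apply/le_anti; rewrite Tu_le ?Tu_ge0 // => x /F0 ->. Qed.

Lemma Tu_le_right v F y t : isM F -> {homo v : x y / x <= y} ->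
  y < v t -> Tu v F y <= F t.
Proof.
move=> FM v_nd yt; apply: Tu_le => [|x vx]; first exact: isM_ge0.
by apply: FM.1; rewrite leNgt; apply/negP => /ltW /v_nd; lra.
Qed.

Lemma Tu_dirac v c : {homo v : x y / x <= y} -> Tu v (dirac_cdf c) = dirac_cdf (v c).
Proof.
move=> v_nd; apply/funext => y; rewrite {2}/dirac_cdf; case: ltP => [yc|cy].
  apply: Tu_eq0 (isM_dirac c) _ => x vx; rewrite /dirac_cdf ifT //.
  by rewrite ltNge; apply/negP => /v_nd; lra.
rewrite (Tu_max (isM_dirac c) cy) /dirac_cdf ?ltxx // => x _.
by case: ltP; lra.
Qed.

Lemma isM_Tu v F : inFU v -> isM F -> isM (Tu v F).
Proof.
move=> [v_nd v_cont] FM; have [F_nd [F_rc [a [b [Fa Fb]]]]] := FM.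
have Tu_nd : {homo Tu v F : y y' / y <= y'}.
  by move=> y y' yy'; apply: Tu_le => [|x vx]; [exact: Tu_ge0 | apply: Tu_ge => //; lra].
have Tu1 y : v b <= y -> Tu v F y = 1.
  by move=> vb; rewrite (Tu_max FM vb) => [|x _]; rewrite (Fb b) //; exact: isM_le1.
split=> //; split; last first.
  exists (v a), (v b); split=> [y ya|]; last exact: Tu1.
  by apply: Tu_eq0 => // x vx; apply: Fa; rewrite ltNge; apply/negP => /v_nd; lra.
move=> y; apply: nondecreasing_cvg_at_right => // e e0.
have [[t yt]|v_le] := pselect (exists t, y < v t); last first.
  have vb : v b <= y by rewrite leNgt; apply/negP => ?; apply: v_le; exists b.
  by exists (y + 1); [lra | rewrite !Tu1 //; lra].
suff [t' yt' Ft'] : exists2 t', y < v t' & F t' <= Tu v F y + e.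
  by exists ((y + v t') / 2); [lra | apply: le_trans Ft'; apply: Tu_le_right => //; lra].
have [[x vx]|v_gt] := pselect (exists x, v x <= y); last first.
  exists (a - 1); first by rewrite ltNge; apply/negP => vay; apply: v_gt; exists (a - 1).
  by rewrite Fa; [have := Tu_ge0 v y FM; lra | lra].
have [m vm m_max] := continuous_sublevel_max v_cont v_nd (ex_intro _ x vx) (ex_intro _ t yt).
have [t' mt' Ft'] := cvg_at_right_le (F_rc m) e0.
exists t'; first by rewrite ltNge; apply/negP => /m_max; lra.
by rewrite (Tu_max FM vm) // => z /m_max /F_nd.
Qed.

Lemma isM_comp F v : isM F -> inFU v ->
  (forall a, exists x, v x < a) -> (forall b, exists x, b <= v x) -> isM (F \o v).
Proof.
move=> [F_nd [F_rc [a [b [Fa Fb]]]]] [v_nd v_cont] v_low v_up.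
split; first by move=> x y /v_nd /F_nd.
split.
  move=> x; apply: nondecreasing_cvg_at_right => [y z /v_nd /F_nd //|e e0].
  have [t vxt Ft] := cvg_at_right_le (F_rc (v x)) e0.
  have [y xy vyt] := continuous_lt_right v_cont vxt.
  by exists y => //=; apply: le_trans Ft; apply: F_nd; exact: ltW.
have [x0 vx0] := v_low a; have [x1 vx1] := v_up b.
exists x0, x1; split=> x x_bd /=; [apply: Fa | apply: Fb].
  by apply: le_lt_trans vx0; apply: v_nd; exact: ltW.
exact: le_trans vx1 (v_nd _ _ x_bd).
Qed.

Lemma Tu_comp_surj F v : isM F -> isM (F \o v) ->
  (forall y, exists x, v x = y) -> Tu v (F \o v) = F.
Proof.
move=> FM FvM v_surj; apply/funext => y; have [x <-] := v_surj y.
by rewrite (Tu_max FvM (lexx (v x))) // => z; exact: FM.1.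
Qed.

Lemma Tu_clamp01_flat F e : isM F -> (forall x, e <= x <= e + 1 -> F x = F e) ->
  Tu (fun x => clamp01 (x - e)) F = three_point_cdf (F e) 1.
Proof.
move=> FM F_flat; have [F_nd [_ [_ [b [_ Fb]]]]] := FM.
apply/funext => y; rewrite /three_point_cdf; case: (ltP y 0) => y0.
  by apply: Tu_eq0 => // x; rewrite /clamp01; case: ltP; case: ltP; lra.
case: (ltP y 1) => y1.
  have <- : F (e + y) = F e by apply: F_flat; rewrite lerDl y0 lerD2l ltW.
  apply: (Tu_max FM); first by rewrite /clamp01; decide_lt; lra.
  by move=> z; rewrite /clamp01 => zy; apply: F_nd; move: zy; case: ltP; case: ltP; lra.
rewrite (Tu_max FM (x := b)) ?Fb //; first by case: ifP.
  by rewrite /clamp01; case: ltP; case: ltP; lra.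
by move=> z _; exact: isM_le1.
Qed.

Lemma isM_comp_squeeze F e : isM F -> isM (F \o squeeze e).
Proof.
move=> FM; apply: isM_comp => //; first exact: inFU_squeeze.
  by move=> a; exists (a - 1); have /andP[_ ?] := squeeze_bounds e (a - 1); lra.
by move=> b; exists (b + 1); have /andP[? _] := squeeze_bounds e (b + 1); lra.
Qed.

Lemma Tu_squeeze F e : isM F -> Tu (squeeze e) (F \o squeeze e) = F.
Proof.
by move=> FM; apply: Tu_comp_surj => //; [exact: isM_comp_squeeze | exact: squeeze_surj].
Qed.

Lemma Tu_clamp01_squeeze F e : isM F ->
  Tu (fun x => clamp01 (x - e)) (F \o squeeze e) = three_point_cdf (F e) 1.
Proof.
move=> FM; rewrite Tu_clamp01_flat /=; [|exact: isM_comp_squeeze|].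
  by rewrite /squeeze /clamp01 subrr ltxx ltr01 subr0.
move=> x /andP[ex xe1]; rewrite /= /squeeze /clamp01; decide_lt.
by case: (ltP (x - e) 1) => ?; congr F; lra.
Qed.

End cdfs.

Section quantiles.
Variables (R : realType) (F : R -> R) (A : R -> Prop).
Hypotheses (FM : isM F) (A_up : forall t t', t <= t' -> A t -> A t') (A1 : A 1) (A0 : ~ A 0).

Let S := [set x | A (F x)].

Let S_nonempty : S !=set0.
Proof. by have [_ [_ [_ [b [_ Fb]]]]] := FM; exists b; rewrite /S /= Fb. Qed.

Let S_lbound : has_lbound S.
Proof.
have [_ [_ [a [_ [Fa _]]]]] := FM; exists a => x; rewrite /S /= => AFx.
by rewrite leNgt; apply/negP => /Fa Fx; rewrite Fx in AFx.
Qed.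

Lemma lt_quantile x : x < inf S -> ~ A (F x).
Proof. by move=> x_lt AFx; have := ge_inf S_lbound AFx; lra. Qed.

Lemma gt_quantile x : inf S < x -> A (F x).
Proof.
move=> /(inf_lt S_nonempty) [z AFz /ltW zx].
by apply: A_up AFz; exact: FM.1.
Qed.

Lemma Tu_quantile v : inFU v -> inf [set y | A (Tu v F y)] = v (inf S).
Proof.
move=> [v_nd v_cont]; apply: inf_threshold => y.
  move=> /(continuous_lt_right v_cont) [x qx vx].
  by apply: A_up (gt_quantile qx); apply: Tu_ge => //; exact: ltW.
move=> /(continuous_gt_left v_cont) [x xq yv] ATu.
by apply: (lt_quantile xq); apply: A_up ATu; exact: Tu_le_right.
Qed.

End quantiles.

Lemma quantile_Tu (R : realType) (rh : (R -> R) -> R) v F :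
  is_quantile rh -> inFU v -> isM F -> rh (Tu v F) = v (rh F).
Proof.
move=> [[p [/andP[p0 p1] rhE]]|[p [/andP[p0 p1] rhE]]] vFU FM;
  have TuM := isM_Tu vFU FM; rewrite !rhE //.
  rewrite /qL; apply: (Tu_quantile (A := fun t => p <= t) FM) => //;
    [move=> ? ? ? ? | move=> ?]; lra.
rewrite /qR; apply: (Tu_quantile (A := fun t => p < t) FM) => //;
  [move=> ? ? ? ? | move=> ?]; lra.
Qed.

Section forward.
Variables (R : realType) (rho : (R -> R) -> R).
Hypothesis rho_comm : comp_sets_equal rho.

Let g c := rho (dirac_cdf c).

Lemma rho_Tu_dirac v : inFU v -> exists2 u, inFU u &
  (forall F, isM F -> rho (Tu v F) = u (rho F)) /\ (forall x, g (v x) = u (g x)).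
Proof.
move=> vFU; have [u [uFU rhoTu]] := rho_comm.2 v vFU; exists u => //; split=> // x.
rewrite /g -rhoTu ?Tu_dirac //; [exact: vFU.1 | exact: isM_dirac].
Qed.

Lemma g_surj y : exists x, g x = y.
Proof.
have [v [[v_nd _] rhoTu]] := rho_comm.1 _ (inFU_cst y).
by exists (v 0); rewrite /g -Tu_dirac // -rhoTu //; exact: isM_dirac.
Qed.

Lemma g_inj : injective g.
Proof.
suff g_neq a b : a < b -> g a != g b.
  by move=> a b gab; case: (ltgtP a b) => // /g_neq; rewrite gab eqxx.
move=> ab; apply/eqP => gab.
have g_cst a' b' : a' < b' -> g a' = g b'.
  move=> ab'; set s := (b' - a') / (b - a).
  have s0 : 0 <= s by rewrite /s divr_ge0 //; lra.
  have sba : s * b - s * a = b' - a' by rewrite -mulrBr /s divfK // subr_eq0 gt_eqF.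
  have [u _ [_ gu]] := rho_Tu_dirac (inFU_affine (a' - s * a) s0).
  have <- : a' - s * a + s * a = a' by lra.
  have <- : a' - s * a + s * b = b' by lra.
  by rewrite !gu gab.
have [x gx] := g_surj (g 0 + 1).
by case: (ltgtP x 0) => [/g_cst|/g_cst|x0]; [ | | rewrite x0 in gx]; lra.
Qed.

Lemma g_between x c y : x < c -> c < y -> (g x < g c < g y) \/ (g y < g c < g x).
Proof.
move=> xc cy.
have [u [u_nd _] [_ gu]] := rho_Tu_dirac (inFU_max c).
have [l [l_nd _] [_ gl]] := rho_Tu_dirac (inFU_min c).
have ux : u (g x) = g c by rewrite -gu max_r // ltW.
have uy : u (g y) = g y by rewrite -gu max_l // ltW.
have lx : l (g x) = g x by rewrite -gl min_l // ltW.
have ly : l (g y) = g c by rewrite -gl min_r // ltW.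
have gxc : g x != g c by rewrite (inj_eq g_inj) lt_eqF.
have gcy : g c != g y by rewrite (inj_eq g_inj) lt_eqF.
case: (leP (g x) (g y)) => [gxy|/ltW gyx]; [left|right].
  have := u_nd _ _ gxy; have := l_nd _ _ gxy; rewrite ux uy lx ly.
  by rewrite !lt_neqAle gxc gcy => -> ->.
have := u_nd _ _ gyx; have := l_nd _ _ gyx; rewrite ux uy lx ly.
by rewrite !lt_neqAle eq_sym gcy eq_sym gxc => -> ->.
Qed.

Lemma g_strictly_monotone : strictly_monotone g.
Proof. exact: strictly_monotone_between g_between. Qed.

Lemma g_continuous : continuous g.
Proof. exact: strictly_monotone_surj_continuous g_strictly_monotone g_surj. Qed.

Let ginv y := projT1 (cid (g_surj y)).
Let ginvK : cancel ginv g. Proof. by move=> y; rewrite /ginv; case: cid. Qed.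
Let gK : cancel g ginv. Proof. by move=> x; apply: g_inj; rewrite ginvK. Qed.

Let psi F := ginv (rho F).

Lemma psi_Tu v F : inFU v -> isM F -> psi (Tu v F) = v (psi F).
Proof.
move=> vFU FM; have [u _ [rhoTu gu]] := rho_Tu_dirac vFU.
by rewrite /psi rhoTu // -{1}(ginvK (rho F)) -gu gK.
Qed.

Lemma psi_dirac c : psi (dirac_cdf c) = c.
Proof. exact: gK. Qed.

Let s t := psi (three_point_cdf t 1).

Lemma psi_levels F e : isM F ->
  (psi F < e -> s (F e) = 0) /\ (e < psi F -> s (F e) = 1).
Proof.
move=> FM; have GM := isM_comp_squeeze e FM.
have psiF : psi F = squeeze e (psi (F \o squeeze e)).
  by rewrite -psi_Tu ?Tu_squeeze //; exact: inFU_squeeze.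
have sFe : s (F e) = clamp01 (psi (F \o squeeze e) - e).
  by rewrite /s -Tu_clamp01_squeeze // psi_Tu //; exact: inFU_clamp01_shift.
rewrite psiF sFe /squeeze /clamp01; set w := psi _.
by split; case: (ltP (w - e) 0); case: (ltP (w - e) 1); lra.
Qed.

Lemma s0 : s 0 = 1.
Proof.
have [_ lv] := psi_levels 0 (isM_dirac 1).
by move: lv; rewrite psi_dirac /dirac_cdf ltr01 => /(_ isT).
Qed.

Lemma s1 : s 1 = 0.
Proof.
have [lv _] := psi_levels 1 (isM_dirac 0).
by move: lv; rewrite psi_dirac /dirac_cdf ltr10 => /(_ ltr01).
Qed.

Lemma s_up t t' : 0 <= t -> t <= t' -> t' <= 1 -> s t = 0 -> s t' = 0.
Proof.
move=> t0 tt' t'1 st; have FM := isM_three_point_cdf t0 tt' t'1.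
have [_ gt0] := psi_levels 0 FM; have [lt1 _] := psi_levels 1 FM.
have F0 : three_point_cdf t t' 0 = t by rewrite /three_point_cdf; decide_lt.
have F1 : three_point_cdf t t' 1 = t' by rewrite /three_point_cdf; decide_lt.
rewrite F0 in gt0; rewrite F1 in lt1; apply: lt1; rewrite ltNge; apply/negP => psi_ge1.
by have := gt0 (lt_le_trans ltr01 psi_ge1); lra.
Qed.

Lemma psi_inf F : isM F -> psi F = inf [set x | s (F x) = 0].
Proof.
move=> FM; apply/esym/inf_threshold => x x_psi; have [psi_lt psi_gt] := psi_levels x FM.
  exact: psi_lt.
by rewrite /= psi_gt //; exact/eqP/oner_neq0.
Qed.

Lemma rho_quantile (A : R -> Prop) : (forall t, 0 <= t <= 1 -> (s t = 0 <-> A t)) ->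
  forall F, isM F -> rho F = g (inf [set x | A (F x)]).
Proof.
move=> sA F FM; rewrite -[LHS]ginvK -/(psi F) psi_inf //; congr (g (inf _)).
by apply/seteqP; split=> x /sA; apply; rewrite isM_ge0 ?isM_le1.
Qed.

Lemma forward : exists (h : R -> R) (rh : (R -> R) -> R),
  strictly_monotone h /\ continuous h /\ (forall y, exists x, h x = y) /\
  is_quantile rh /\ (forall F, isM F -> rho F = h (rh F)).
Proof.
have [rh [rh_q rhoE]] : exists rh, is_quantile rh /\ forall F, isM F -> rho F = g (rh F).
  have s0_neq0 : s 0 <> 0 by rewrite s0; exact/eqP/oner_neq0.
  have [p [[p_range sp]|[p_range sp]]] := upward_closed01_threshold s_up s1 s0_neq0.
    exists (fun F => qL F p); split; first by left; exists p.
    exact: (rho_quantile (A := fun t => p <= t)).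
  exists (fun F => qR F p); split; first by right; exists p.
  exact: (rho_quantile (A := fun t => p < t)).
exists g, rh; split; first exact: g_strictly_monotone.
by split; [exact: g_continuous | split; [exact: g_surj | split]].
Qed.

End forward.

Lemma backward (R : realType) (rho : (R -> R) -> R) (h : R -> R) (rh : (R -> R) -> R) :
    strictly_monotone h -> continuous h -> (forall y, exists x, h x = y) ->
    is_quantile rh -> (forall F, isM F -> rho F = h (rh F)) ->
  comp_sets_equal rho.
Proof.
move=> h_sm h_cont h_surj rh_q rhoE; have [k hK] := choice h_surj.
have kK : cancel h k by move=> x; apply: (strictly_monotone_inj h_sm); rewrite hK.
have k_cont := strictly_monotone_surj_continuous (strictly_monotone_can hK h_sm)
  (fun x => ex_intro _ (h x) (kK x)).
split=> [u uFU|v vFU].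
  have vFU := inFU_conj hK h_sm h_cont k_cont uFU.
  exists (k \o u \o h); split=> // F FM; rewrite !rhoE //; last exact: isM_Tu.
  by rewrite (quantile_Tu rh_q vFU FM) /= hK.
have uFU := inFU_conj kK (strictly_monotone_can hK h_sm) k_cont h_cont vFU.
exists (h \o v \o k); split=> // F FM; rewrite !rhoE //; last exact: isM_Tu.
by rewrite (quantile_Tu rh_q vFU FM) /= kK.
Qed.

Theorem proposition2 (R : realType) (rho : (R -> R) -> R) :
  comp_sets_equal rho <->
  exists (h : R -> R) (rh : (R -> R) -> R),
    strictly_monotone h /\ continuous h /\ (forall y, exists x, h x = y) /\
    is_quantile rh /\ (forall F, isM F -> rho F = h (rh F)).
Proof.
split; first exact: forward.
by move=> [h [rh [h_sm [h_cont [h_surj [rh_q rhoE]]]]]]; exact: backward rh_q rhoE.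
Qed.
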